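(* Let $n \geq 2$ and let $\mathbb{F}_q$ be a finite field. The special unit-digraph on $\operatorname{Mat}_n(\mathbb{F}_q)$ is connected and has diameter $2$. It can be regarded as a simple undirected regular graph (i.e. its connection set $\operatorname{SL}_n(\mathbb{F}_q)$ satisfies $-\operatorname{SL}_n(\mathbb{F}_q)=\operatorname{SL}_n(\mathbb{F}_q)$) if and only if $n$ is even or $\operatorname{char}(\mathbb{F}_q) = 2$. Its adjacency matrix has at most $n+q-1$ distinct eigenvalues.
   Context: The special unit-digraph on $\operatorname{Mat}_n(\mathbb{F}_q)$ is the Cayley digraph $\operatorname{Cay}(\operatorname{Mat}_n(\mathbb{F}_q), \operatorname{SL}_n(\mathbb{F}_q))$: vertex set $\operatorname{Mat}_n(\mathbb{F}_q)$, with a directed edge from $A$ to $B$ iff $\det(B - A) = 1$. *)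

From HB Require Import structures.
From mathcomp Require Import all_boot all_order all_algebra all_field.
Set Implicit Arguments. Unset Strict Implicit. Unset Printing Implicit Defensive.
Import GRing.Theory.
Local Open Scope ring_scope.

Definition SL_set (F : finFieldType) (n : nat) : {set 'M[F]_n} :=
  [set A : 'M[F]_n | \det A == 1].

Definition su_edge (F : finFieldType) (n : nat) : rel 'M[F]_n :=
  fun A B => \det (B - A) == 1.

Definition walk (T : eqType) (e : rel T) (k : nat) (x y : T) : Prop :=
  exists p : seq T, [/\ size p = k, path e x p & last x p = y].

Definition strongly_connected (T : eqType) (e : rel T) : Prop :=
  forall x y : T, exists k, walk e k x y.

Definition has_diameter (T : eqType) (e : rel T) (d : nat) : Prop :=
  (forall x y : T, exists2 k, (k <= d)%N & walk e k x y) /\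
  (exists x y : T, forall k, (k < d)%N -> ~ walk e k x y).

Definition adj_mx (T : finType) (e : rel T) : 'M[algC]_(#|T|) :=
  \matrix_(i, j) (e (enum_val i) (enum_val j))%:R.

From mathcomp Require Import all_boot all_order all_algebra all_field.
Import GRing.Theory.
Set Implicit Arguments. Unset Strict Implicit. Unset Printing Implicit Defensive.
Local Open Scope ring_scope.

(* Writing a nonzero matrix as L * pid_mx r * U with L, U invertible reduces
   the problem of splitting it into two summands of prescribed determinants to
   a diagonal matrix, where a bidiagonal matrix with one corner entry does the
   job; hence any two distinct vertices are joined by a walk of length 2.
   Negation preserves SL_n iff det (-1) = (-1)^n = 1.  For the spectrum, the
   affine maps X |-> P X Q + C with det P * det Q = 1 are automorphisms of the
   digraph acting transitively on the pairs (X, Y) for which Y - X has a given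
   rank (if singular) or a given determinant (if invertible).  Every power of
   the adjacency matrix is therefore constant on these n + q - 1 classes, so
   its minimal polynomial has degree at most n + q - 1. *)

Definition corner_bidiag_mx (R : nzRingType) (n : nat) (d : 'I_n.+1 -> R)
    (e c : R) : 'M[R]_n.+1 :=
  \matrix_(i, j) if i == j then d i else if j == i.+1 :> nat then e
                 else if (i == ord_max) && (j == ord0) then c else 0.

Lemma det_corner_bidiag_mx (R : comNzRingType) (n : nat) (d : 'I_n.+2 -> R)
    (e c : R) :
  \det (corner_bidiag_mx d e c) = \prod_i d i + (- e) ^+ n.+1 * c.
Proof.
have bump0 (i : nat) : bump 0 i = i.+1 by [].
have bump_max (i : 'I_n.+1) : bump n.+1 i = i by rewrite /bump leqNgt ltn_ord.
rewrite (expand_det_col _ ord0) (bigD1 ord0) //= (bigD1 ord_max) //=.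
rewrite big1 ?addr0 => [|i /andP[i0 imax]]; last first.
  by rewrite !mxE (negPf i0) (negPf imax) mul0r.
rewrite !mxE !eqxx /= /cofactor /= expr0 mul1r addn0; congr (_ + _).
  rewrite -det_tr det_trig; last first.
    apply/is_trig_mxP => i j ij; rewrite !mxE -!val_eqE /= !bump0 !eqSS.
    by rewrite (gtn_eqF ij) andbF ltn_eqF // ltnS ltnW.
  rewrite [RHS]big_ord_recl; congr (_ * _).
  by apply: eq_bigr => i _; rewrite !mxE eqxx.
suff -> : \det (row' ord_max (col' ord0 (corner_bidiag_mx d e c))) = e ^+ n.+1.
  by rewrite [LHS]mulrC -exprMn mulN1r.
rewrite det_trig; last first.
  apply/is_trig_mxP => i j ij; rewrite !mxE -!val_eqE /= bump0 !bump_max.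
  by rewrite (ltn_eqF (ltn_trans ij (ltnSn _))) eqSS (gtn_eqF ij) andbF.
rewrite (eq_bigr (fun _ => e)) ?prodr_const ?card_ord // => i _.
by rewrite !mxE -!val_eqE /= bump0 !bump_max (ltn_eqF (ltnSn _)) eqxx.
Qed.

Lemma diag_mx_split_det (F : fieldType) (n : nat) (D : 'M[F]_n.+2) (u v : F) :
  is_diag_mx D -> D 0 0 != 0 -> exists X, \det X = u /\ \det (D - X) = v.
Proof.
(* [X] and [D - X] are both corner bidiagonal; since [d 0 = 0] and the diagonal
   of [D - X] is [D 0 0, y, 1, ..., 1], we get [\det X = (-1)^(n+1) c] and
   [\det (D - X) = D 0 0 * y - c]. *)
move=> /is_diag_mxP Ddiag D00.
pose c := (-1) ^+ n.+1 * u; pose y := (v + c) / D 0 0.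
pose d (i : 'I_n.+2) := if i == 0 then 0 else if i == 1 :> nat then D i i - y
                        else D i i - 1.
exists (corner_bidiag_mx d 1 c); split.
  rewrite det_corner_bidiag_mx (bigD1 0) //= /d eqxx mul0r add0r.
  by rewrite /c mulrA -exprMn mulrNN mulr1 expr1n mul1r.
have -> : D - corner_bidiag_mx d 1 c =
          corner_bidiag_mx (fun i => D i i - d i) (-1) (- c).
  apply/matrixP => i j; rewrite !mxE; case: eqP => [->//|/eqP ij].
  rewrite Ddiag ?sub0r; last by rewrite val_eqE.
  by case: ifP => _ //; case: ifP => _; rewrite ?oppr0.
rewrite det_corner_bidiag_mx opprK expr1n mul1r !big_ord_recl big1 => [|i _]; last first.
  by rewrite /d /= opprB addrC subrK.
by rewrite /d /= subr0 subKr mulr1 /y mulrCA mulfV // mulr1 addrK.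
Qed.

Lemma det_ebase_neq0 (F : fieldType) (n : nat) (M : 'M[F]_n) :
  \det (col_ebase M) * \det (row_ebase M) != 0.
Proof.
by rewrite mulf_neq0 // -unitfE -unitmxE ?col_ebase_unit ?row_ebase_unit.
Qed.

Lemma mx_split_det (F : fieldType) (n : nat) (M : 'M[F]_n.+2) (u v : F) :
  M != 0 -> exists X, \det X = u /\ \det (M - X) = v.
Proof.
move=> M0; set L := col_ebase M; set U := row_ebase M.
have LU0 : \det L * \det U != 0 by apply: det_ebase_neq0.
pose t := (\det L * \det U)^-1.
have pid_diag : is_diag_mx (pid_mx (\rank M) : 'M[F]_n.+2).
  by apply/is_diag_mxP => i j; rewrite mxE => /negPf ->.
have pid00 : (pid_mx (\rank M) : 'M[F]_n.+2) 0 0 != 0.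
  by rewrite mxE eqxx lt0n mxrank_eq0 M0 oner_eq0.
have [X0 [detX0 detDX0]] := diag_mx_split_det (t * u) (t * v) pid_diag pid00.
exists (L *m X0 *m U); split.
  by rewrite !det_mulmx detX0 mulrAC mulrA mulfV ?mul1r.
rewrite -{1}(mulmx_ebase M) -/L -/U -mulmxBl -mulmxBr !det_mulmx detDX0.
by rewrite mulrAC mulrA mulfV ?mul1r.
Qed.

Lemma walk0 (T : eqType) (e : rel T) (x y : T) : walk e 0 x y <-> x = y.
Proof.
split=> [[p [size_p _ <-]] | ->]; last by exists [::].
by case: p size_p.
Qed.

Lemma walk1 (T : eqType) (e : rel T) (x y : T) : walk e 1 x y <-> e x y.
Proof.
split=> [[p [size_p + <-]] | exy]; last by exists [:: y]; rewrite /= exy.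
by case: p size_p => [|z [|//]] //= _; rewrite andbT.
Qed.

Lemma walk2 (T : eqType) (e : rel T) (x y z : T) :
  e x y -> e y z -> walk e 2 x z.
Proof. by move=> exy eyz; exists [:: y; z]; rewrite /= exy eyz. Qed.

Lemma su_edge_walk2 (F : finFieldType) (n : nat) (A B : 'M[F]_n.+2) :
  A != B -> walk (@su_edge F n.+2) 2 A B.
Proof.
rewrite eq_sym -subr_eq0 => BA0.
have [X [detX detBAX]] := mx_split_det 1 1 BA0.
apply: (@walk2 _ _ _ (A + X)); rewrite /su_edge.
  by rewrite [A + X]addrC addrK detX.
by rewrite opprD addrA detBAX.
Qed.

Lemma det_delta_mx00 (R : comNzRingType) (n : nat) :
  \det (delta_mx 0 0 : 'M[R]_n.+2) = 0.
Proof. by rewrite (expand_det_row _ ord_max) big1 // => j _; rewrite mxE mul0r. Qed.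

Lemma detN (R : comPzRingType) (n : nat) (A : 'M[R]_n) :
  \det (- A) = (-1) ^+ n * \det A.
Proof. by rewrite -scaleN1r detZ. Qed.

Lemma signr_eq1 (R : nzRingType) (n : nat) :
  (-1) ^+ n = 1 :> R <-> ~~ odd n \/ 2 \in [pchar R].
Proof.
rewrite -signr_odd; case: (odd n); last by split; [left | rewrite expr0].
rewrite expr1; split=> [N1 | [//|pchar2]]; last by rewrite oppr_pchar2.
by right; rewrite inE /= mulr2n -{1}N1 addNr.
Qed.

Lemma SL_setN (F : finFieldType) (n : nat) :
  [set - A | A in SL_set F n] = SL_set F n <-> (-1) ^+ n = 1 :> F.
Proof.
split=> [SLN | sign1].
  have : - 1 \in SL_set F n by rewrite -SLN imset_f // inE det1.
  by rewrite inE detN det1 mulr1 => /eqP.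
apply/setP => A; rewrite !inE; apply/imsetP/idP => [[B + ->]|detA].
  by rewrite inE detN sign1 mul1r.
by exists (- A); rewrite ?opprK // inE detN sign1 mul1r.
Qed.

Lemma su_edge_sym (F : finFieldType) (n : nat) :
  (forall A B : 'M[F]_n, su_edge A B = su_edge B A) <-> (-1) ^+ n = 1 :> F.
Proof.
split=> [sym | sign1 A B].
  move: (sym 0 1); rewrite /su_edge subr0 sub0r det1 eqxx detN det1 mulr1.
  by move=> /esym /eqP.
by rewrite /su_edge -opprB detN sign1 mul1r.
Qed.

Lemma adj_mxE (T : finType) (e : rel T) (x y : T) :
  adj_mx e (enum_rank x) (enum_rank y) = (e x y)%:R.
Proof. by rewrite mxE !enum_rankK. Qed.

Lemma adj_mx_exp_mono (T : finType) (e : rel T) (f : T -> T) :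
  bijective f -> {mono f : x y / e x y} -> forall m x y,
  (adj_mx e ^+ m) (enum_rank (f x)) (enum_rank (f y)) =
  (adj_mx e ^+ m) (enum_rank x) (enum_rank y).
Proof.
move=> [g fK gK] f_mono; elim=> [|m IHm] x y.
  by rewrite !expr0 !mxE !(inj_eq enum_rank_inj) (inj_eq (can_inj fK)).
rewrite !exprSr !mxE.
pose h (l : 'I_#|T|) := enum_rank (f (enum_val l)).
rewrite (reindex h) /=; last first.
  by exists (fun l => enum_rank (g (enum_val l))) => l _;
     rewrite /h enum_rankK ?fK ?gK enum_valK.
by apply: eq_bigr => l _; rewrite /h IHm adj_mxE f_mono -adj_mxE enum_valK.
Qed.

Section AffineAutomorphisms.
Variables (F : finFieldType) (n : nat) (P Q : 'M[F]_n).
Hypothesis detPQ : \det P * \det Q = 1.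

Let PQ_unit : (P \in unitmx) && (Q \in unitmx).
Proof. by rewrite !unitmxE -unitrM detPQ unitr1. Qed.

Lemma su_edge_affine_mono (C : 'M[F]_n) :
  {mono (fun X => P *m X *m Q + C) : A B / su_edge A B}.
Proof.
move=> A B; rewrite /su_edge opprD addrACA subrr addr0 -mulmxBl -mulmxBr.
by rewrite !det_mulmx mulrAC detPQ mul1r.
Qed.

Lemma su_adj_exp_equiv (X Y X' Y' : 'M[F]_n) (m : nat) :
  Y' - X' = P *m (Y - X) *m Q ->
  (adj_mx (@su_edge F n) ^+ m) (enum_rank X') (enum_rank Y') =
  (adj_mx (@su_edge F n) ^+ m) (enum_rank X) (enum_rank Y).
Proof.
case/andP: PQ_unit => P_unit Q_unit eqY'; pose C := X' - P *m X *m Q.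
have fX : P *m X *m Q + C = X' by rewrite addrC subrK.
have fY : P *m Y *m Q + C = Y'.
  by rewrite addrCA -mulmxBl -mulmxBr -eqY' addrC subrK.
rewrite -fX -fY; apply: (adj_mx_exp_mono _ (su_edge_affine_mono C)).
exists (fun Z => invmx P *m (Z - C) *m invmx Q) => Z.
  by rewrite addrK -[P *m Z *m Q]mulmxA mulKmx // mulmxK.
by rewrite !mulmxA mulmxV // mul1mx mulmxKV // subrK.
Qed.

End AffineAutomorphisms.

Lemma det0_rank_lt (F : fieldType) (n : nat) (M : 'M[F]_n) :
  \det M = 0 -> (\rank M < n)%N.
Proof. by move=> det0; rewrite ltnNge row_leq_rank row_free_unit unitmxE det0 unitr0. Qed.

Lemma eqrank_mx_equiv (F : fieldType) (m n : nat) (M M' : 'M[F]_(m, n)) :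
  \rank M = \rank M' ->
  exists2 P, P \in unitmx & exists2 Q, Q \in unitmx & M' = P *m M *m Q.
Proof.
move=> eq_rank; set L := col_ebase M; set U := row_ebase M.
have L_unit : L \in unitmx by apply: col_ebase_unit.
have U_unit : U \in unitmx by apply: row_ebase_unit.
exists (col_ebase M' *m invmx L); first by rewrite unitmx_mul unitmx_inv col_ebase_unit.
exists (invmx U *m row_ebase M').
  by rewrite unitmx_mul unitmx_inv U_unit row_ebase_unit.
rewrite -{1}(mulmx_ebase M) -/L -/U !mulmxA mulmxKV // -[_ *m invmx U]mulmxA.
by rewrite mulmxV // mulmx1 -{1}(mulmx_ebase M') eq_rank.
Qed.

(* Right multiplication by [diag(1, ..., 1, t)] in the coordinates of
   [row_ebase M] fixes [M] because the last row of [pid_mx (\rank M)] is zero. *)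
Lemma rank_lt_mulmx_fix (F : fieldType) (n : nat) (M : 'M[F]_n.+1) (t : F) :
  (\rank M < n.+1)%N -> exists2 Q, \det Q = t & M *m Q = M.
Proof.
move=> rank_lt; set U := row_ebase M.
have U_unit : U \in unitmx by apply: row_ebase_unit.
pose D := diag_mx (\row_j (if j == ord_max then t else 1) : 'rV[F]_n.+1).
have pidD : pid_mx (\rank M) *m D = pid_mx (\rank M) :> 'M_n.+1.
  apply/matrixP => i j; rewrite mul_mx_diag !mxE.
  have [-> | _] := eqVneq j ord_max; last by rewrite mulr1.
  by case: eqP => [-> | _]; rewrite ?(ltn_geF rank_lt) ?andbF mul0r.
exists (invmx U *m D *m U).
  rewrite !det_mulmx det_inv mulrAC mulVf -?unitfE -?unitmxE // mul1r det_diag.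
  rewrite (bigD1 ord_max) //= big1 => [|j /negPf j_max]; last by rewrite mxE j_max.
  by rewrite mxE eqxx mulr1.
by rewrite -{1 2}(mulmx_ebase M) -/U !mulmxA mulmxK // -[_ *m D]mulmxA pidD.
Qed.

(* Labels the orbit of [M] under [M |-> P *m M *m Q], [\det P * \det Q = 1]. *)
Definition mx_class (F : fieldType) (n : nat) (M : 'M[F]_n.+1) :
    'I_n.+1 + {x : F | x != 0} :=
  if insub (\det M) is Some d then inr d else inl (inord (\rank M)).

Lemma mx_class_equiv (F : fieldType) (n : nat) (M M' : 'M[F]_n.+1) :
  mx_class M = mx_class M' ->
  exists P Q, \det P * \det Q = 1 /\ M' = P *m M *m Q.
Proof.
rewrite /mx_class; case: insubP => [d detM0 detM | /negPn/eqP detM0];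
  case: insubP => [d' _ detM' | /negPn/eqP detM'0] // [].
  move=> eq_d; have M_unit : M \in unitmx by rewrite unitmxE unitfE.
  exists (M' *m invmx M), 1; split; last by rewrite mulmxKV // mulmx1.
  by rewrite det1 mulr1 det_mulmx det_inv -detM' -eq_d detM mulfV.
move=> /(congr1 val) /=; rewrite !inordK ?det0_rank_lt // => /eqrank_mx_equiv.
move=> [P0 P0_unit [Q0 Q0_unit ->]].
have [Q1 detQ1 MQ1] :=
  rank_lt_mulmx_fix ((\det P0 * \det Q0)^-1) (det0_rank_lt detM0).
exists P0, (Q1 *m Q0); split; last by rewrite mulmxA -[P0 *m M *m Q1]mulmxA MQ1.
by rewrite det_mulmx detQ1 mulrCA mulVf // mulf_neq0 // -unitfE -unitmxE.
Qed.

(* The degree of the minimal polynomial of [A] is the dimension of the span of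
   its powers. *)
Lemma eigenvalues_le_powers_rank (R : closedFieldType) (N K : nat) (A : 'M[R]_N)
    (E : 'M[R]_(K, N * N)) :
  (forall m, (mxvec (A ^+ m) <= E)%MS) ->
  exists s : seq R, (size s <= K)%N /\ forall a, eigenvalue A a -> a \in s.
Proof.
case: N A E => [|N] A E powersE.
  by exists [::]; split=> // a; rewrite /eigenvalue thinmx0 eqxx.
have deg_le : (degree_mxminpoly A <= K)%N.
  rewrite /degree_mxminpoly; case: ex_minnP => d _ ->//.
  apply: leq_trans (rank_leq_row E); apply: mxrankS.
  by apply/row_subP => i; rewrite rowK.
have [r minpolyE] := closed_field_poly_normal (mxminpoly A).
rewrite (monicP (mxminpoly_monic A)) scale1r in minpolyE.
exists r; split.
  by move: (size_mxminpoly A); rewrite minpolyE size_prod_XsubC => -[->].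
by move=> a; rewrite eigenvalue_root_min minpolyE root_prod_XsubC.
Qed.

Lemma eigenvalues_le_card_fibers (R : closedFieldType) (N : nat) (A : 'M[R]_N)
    (C : finType) (c : 'I_N -> 'I_N -> C) :
  (forall m i j i' j', c i j = c i' j' -> (A ^+ m) i j = (A ^+ m) i' j') ->
  exists s : seq R, (size s <= #|C|)%N /\ forall a, eigenvalue A a -> a \in s.
Proof.
move=> A_fibers; pose chi g : 'M[R]_N := \matrix_(i, j) (c i j == g)%:R.
pose E := \matrix_(g < #|C|) mxvec (chi (enum_val g)).
apply: (@eigenvalues_le_powers_rank _ _ _ _ E).
move=> m; pose val_at g := if [pick ij | c ij.1 ij.2 == g] is Some ij
                            then (A ^+ m) ij.1 ij.2 else 0.
have val_atE i j : val_at (c i j) = (A ^+ m) i j.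
  rewrite /val_at; case: pickP => [ij /eqP/A_fibers// | /(_ (i, j))].
  by rewrite eqxx.
have -> : A ^+ m = \sum_(g < #|C|) val_at (enum_val g) *: chi (enum_val g).
  apply/matrixP => i j; rewrite summxE (bigD1 (enum_rank (c i j))) //= big1.
    by rewrite !mxE enum_rankK eqxx mulr1 addr0 val_atE.
  move=> g /negPf g_ij; rewrite !mxE; case: eqP => [cij | _]; last by rewrite mulr0.
  by rewrite cij enum_valK eqxx in g_ij.
rewrite linear_sum; apply: summx_sub => g _; rewrite linearZ; apply: scalemx_sub.
by have := row_sub g E; rewrite rowK.
Qed.

Lemma su_adj_exp_mx_class (F : finFieldType) (n m : nat)
    (i j i' j' : 'I_#|'M[F]_n.+1|) :
  mx_class (enum_val j - enum_val i) = mx_class (enum_val j' - enum_val i') ->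
  (adj_mx (@su_edge F n.+1) ^+ m) i j = (adj_mx (@su_edge F n.+1) ^+ m) i' j'.
Proof.
move=> /mx_class_equiv[P [Q [detPQ eq_diff]]].
have := su_adj_exp_equiv detPQ m eq_diff.
by rewrite !enum_valK.
Qed.

Theorem corollary3p11 (F : finFieldType) (n : nat) (hn : (2 <= n)%N) :
  [/\ strongly_connected (@su_edge F n),
      has_diameter (@su_edge F n) 2,
      ([set - A | A in SL_set F n] = SL_set F n <-> (~~ odd n \/ 2 \in [pchar F])),
      ((forall A B : 'M[F]_n, su_edge A B = su_edge B A) <->
         (~~ odd n \/ 2 \in [pchar F]))
    & exists s : seq algC, (size s <= n + #|F| - 1)%N /\
        (forall a : algC, eigenvalue (adj_mx (@su_edge F n)) a -> a \in s)].
Proof.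
case: n hn => [|[|n]] // _.
have diam2 (A B : 'M[F]_n.+2) :
    exists2 k, (k <= 2)%N & walk (@su_edge F n.+2) k A B.
  have [-> | AB] := eqVneq A B; first by exists 0%N => //; apply/walk0.
  by exists 2%N => //; apply: su_edge_walk2.
split.
- by move=> A B; have [k _ walkAB] := diam2 A B; exists k.
- split=> //; exists 0, (delta_mx 0 0) => -[|[|//]] _.
    by move/walk0/matrixP/(_ 0 0); rewrite !mxE => /eqP; rewrite eq_sym oner_eq0.
  by move/walk1; rewrite /su_edge subr0 det_delta_mx00 eq_sym oner_eq0.
- exact: iff_trans (SL_setN F n.+2) (signr_eq1 F n.+2).
- exact: iff_trans (su_edge_sym F n.+2) (signr_eq1 F n.+2).
pose c (i j : 'I_#|'M[F]_n.+2|) := mx_class (enum_val j - enum_val i).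
have [s [size_s eig_s]] :=
  eigenvalues_le_card_fibers (c := c) (@su_adj_exp_mx_class F n.+1).
exists s; split=> //; apply: leq_trans size_s _.
rewrite card_sum card_ord card_sig cardC1 -subn1 addnBA //.
by apply/card_gt0P; exists 0.
Qed.
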